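(* Let $k \in \mathbb{N}$ with $k > 3$. Then $$\max\left\{1, \left\lceil\frac{k}{4}\right\rceil - 1\right\} \leq q(k) < \begin{cases} \frac{k}{3} & \text{if } k \bmod 3 = 0,\\ \left\lceil\frac{k}{2}\right\rceil & \text{otherwise.}\end{cases}$$
   Context: For a graph $G$ with an edge-colouring $f\colon E(G)\to\{1,\dots,k\}$ and $1\le j\le k$: $e_j[v]$ is the number of edges coloured $j$ in the subgraph induced by the closed neighbourhood $N[v]$ of $v$, and $\deg_j(v)$ is the number of edges coloured $j$ incident to $v$. Given a strictly increasing sequence of positive integers $(a_1,\dots,a_k)$, a $d$-regular graph $G$ with $d=\sum_j a_j$ is an $(a_1,\dots,a_k)$-flip graph if there is an edge-colouring with colours $\{1,\dots,k\}$ such that $\deg_j(v)=a_j$ for all vertices $v$ and all $j$, and $e_k[v]<e_{k-1}[v]<\dots<e_1[v]$ for every vertex $v$; the sequence is then a $k$-flip sequence. For $k\ge 2$, call an index $q\in\{1,\dots,k-1\}$ admissible if there exists $h\in\mathbb{N}$ such that for every $N\in\mathbb{N}$ there is a $k$-flip sequence $(a_1,\dots,a_k)$ with $a_q=h$ and $a_k>N$. $q(k)$ denotes the largest admissible index (the upper bound asserts that every admissible index is below the stated value). *)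

From mathcomp Require Import all_boot all_order.
Set Implicit Arguments. Unset Strict Implicit. Unset Printing Implicit Defensive.

Definition simple_graph (T : finType) (e : rel T) : Prop :=
  (forall x, ~~ e x x) /\ (forall x y, e x y = e y x).

Definition cnbhd (T : finType) (e : rel T) (v : T) : {set T} :=
  [set u | (u == v) || e v u].

(* deg_j(v): number of edges coloured j incident to v.
   An edge colouring is a symmetric function c : T -> T -> nat (only its
   values on edges matter); colours are 1..k. *)
Definition degc (T : finType) (e : rel T) (c : T -> T -> nat) (j : nat) (v : T)
  : nat := #|[set u | e v u && (c v u == j)]|.

(* e_j[v]: number of edges coloured j in the subgraph induced by N[v].
   Ordered pairs are counted, hence the division by 2 (exact, since e is
   symmetric and irreflexive and c is symmetric). *)
Definition ecnt (T : finType) (e : rel T) (c : T -> T -> nat) (j : nat) (v : T)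
  : nat :=
  #|[set p : T * T | [&& p.1 \in cnbhd e v, p.2 \in cnbhd e v,
                        e p.1 p.2 & c p.1 p.2 == j]]| %/ 2.

(* Sequence (a_1,...,a_k) given as a : nat -> nat, indices 1..k relevant. *)
Definition incr_pos_seq (k : nat) (a : nat -> nat) : Prop :=
  (forall j, 1 <= j <= k -> 0 < a j) /\
  (forall i j, 1 <= i -> i < j -> j <= k -> a i < a j).

Definition flip_graph (k : nat) (a : nat -> nat) (T : finType) (e : rel T) : Prop :=
  incr_pos_seq k a /\ simple_graph e /\
  (forall v, #|[set u | e v u]| = \sum_(1 <= j < k.+1) a j) /\
  exists c : T -> T -> nat,
    (forall x y, c x y = c y x) /\
    (forall x y, e x y -> 1 <= c x y <= k) /\
    (forall v j, 1 <= j <= k -> degc e c j v = a j) /\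
    (forall v i j, 1 <= i -> i < j -> j <= k -> ecnt e c j v < ecnt e c i v).

Definition flip_seq (k : nat) (a : nat -> nat) : Prop :=
  incr_pos_seq k a /\
  exists (T : finType) (e : rel T), 0 < #|T| /\ flip_graph k a e.

Definition admissible (k q : nat) : Prop :=
  1 <= q <= k.-1 /\
  exists h : nat, forall N : nat, exists a : nat -> nat,
    flip_seq k a /\ a q = h /\ N < a k.

From mathcomp Require Import all_boot all_order.
From mathcomp Require Import zify.
Set Implicit Arguments. Unset Strict Implicit. Unset Printing Implicit Defensive.

(* Lower bound: colour degrees and the numbers e_j[v] add up under Cartesian
   products of edge-coloured graphs, so a flip graph can be assembled from small
   pieces and checked by arithmetic.  The pieces are joins of two copies of t
   disjoint 4-cycles (cycle edges coloured c, join edges coloured l > q) and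
   monochromatic K2's and K3's.  A colour c <= q never occurs on join edges, so
   a_c does not depend on t while a_k grows linearly in t; cycle edges carry
   2t + 1 units of e_j per unit of degree and join edges only 3, which for
   4q <= k leaves room to keep the e_j[v] decreasing.

   Upper bound: if k <= 3q, monotonicity of the e_j[v] puts at most twice as
   many edges of large colour (> q) as of small colour into every N[v].  A small
   edge xy of N[v] either touches v, or follows a small edge vx or vy, or is the
   base of a triangle vxy with two large sides; such a triangle puts the large
   edges vx and yv into N[y] and N[x].  Summing over v gives
   a_k <= 4S + 4S^2 with S = a_1 + ... + a_q <= q a_q, so a_k stays bounded
   when a_q is fixed. *)

Lemma sum_indicator (lo hi i x : nat) :
  \sum_(lo <= j < hi) (j == i) * x = (lo <= i < hi) * x.
Proof.
rewrite (eq_bigr (fun j => if j == i then x else 0)); last first.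
  by move=> j _; case: (j == i); rewrite ?mul1n ?mul0n.
by rewrite -big_mkcond big_nat1_eq; case: ifP; rewrite ?mul1n.
Qed.

Lemma card_set_sum (T : finType) (P : pred T) : #|[set x | P x]| = \sum_x P x.
Proof. by rewrite -sum1dep_card big_mkcond; apply: eq_bigr => x _; case: (P x). Qed.

Lemma card_set_nat_range (T : finType) (P : pred T) (f : T -> nat) lo hi :
  #|[set x | P x && (lo <= f x < hi)]| = \sum_(lo <= j < hi) #|[set x | P x && (f x == j)]|.
Proof.
rewrite card_set_sum; under [RHS]eq_bigr => j _ do rewrite card_set_sum.
rewrite exchange_big /=; apply: eq_bigr => x _.
case: (P x) => /=; last by rewrite big1.
rewrite -[LHS]muln1 -sum_indicator.
by apply: eq_bigr => j _; rewrite muln1 eq_sym.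
Qed.

Lemma cardsU_disjoint (T : finType) (A B : {set T}) :
  [disjoint A & B] -> #|A :|: B| = #|A| + #|B|.
Proof. by move=> dAB; apply/eqP; rewrite (leq_card_setU A B).2. Qed.

Lemma card_set_pairs (A B : finType) (S : {set A * B}) :
  #|S| = \sum_a #|[set b | (a, b) \in S]|.
Proof.
rewrite -sum1_card big_mkcond /=.
rewrite (eq_bigr (fun p => (fun a b => ((a, b) \in S) : nat) p.1 p.2)) => [|[] //].
rewrite -(pair_bigA _ (fun a b => ((a, b) \in S) : nat)) /=.
by apply: eq_bigr => a _; rewrite card_set_sum.
Qed.

Definition cnbhd_arcs (T : finType) (e : rel T) (c : T -> T -> nat) (j : nat) (v : T)
  : {set T * T} :=
  [set p | [&& p.1 \in cnbhd e v, p.2 \in cnbhd e v, e p.1 p.2 & c p.1 p.2 == j]].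

Lemma ecnt_arcs (T : finType) (e : rel T) c j v :
  ecnt e c j v = #|cnbhd_arcs e c j v| %/ 2.
Proof. by []. Qed.

Lemma card_nbhd_degc (T : finType) (e : rel T) (c : T -> T -> nat) v lo hi :
  #|[set u | e v u && (lo <= c v u < hi)]| = \sum_(lo <= j < hi) degc e c j v.
Proof. exact: card_set_nat_range. Qed.

(** * Edge-coloured graphs and Cartesian products *)

Record cgraph := CGraph { vtx : finType; adj : rel vtx; col : vtx -> vtx -> nat }.
Arguments adj : clear implicits.
Arguments col : clear implicits.

(* Arcs are ordered pairs, so E j is e_j[v]. *)
Record has_profile (k : nat) (G : cgraph) (A E : nat -> nat) : Prop := HasProfile {
  profile_simple : simple_graph (adj G);
  profile_col_sym : forall x y, col G x y = col G y x;
  profile_col_range : forall x y, adj G x y -> 1 <= col G x y <= k;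
  profile_degc : forall v j, 1 <= j <= k -> degc (adj G) (col G) j v = A j;
  profile_arcs : forall v j, 1 <= j <= k ->
    #|cnbhd_arcs (adj G) (col G) j v| = (E j).*2;
  profile_nonempty : 0 < #|vtx G| }.

Lemma eq_has_profile k G A E A' E' :
  {in [pred j | 1 <= j <= k], A =1 A'} -> {in [pred j | 1 <= j <= k], E =1 E'} ->
  has_profile k G A E -> has_profile k G A' E'.
Proof.
move=> eqA eqE [simG symG rangeG degG arcsG neG]; split => // v j kj.
- by rewrite -eqA // degG.
- by rewrite -eqE // arcsG.
Qed.

Lemma flip_seq_of_profile k G A E :
  has_profile k G A E -> incr_pos_seq k A ->
  (forall i j, 1 <= i -> i < j -> j <= k -> E j < E i) -> flip_seq k A.
Proof.
move=> [simG symG rangeG degG arcsG neG] incrA decrE; split => //.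
exists (vtx G), (adj G); split => //; do 2!split => //.
split.
  move=> v; rewrite (eq_big_nat _ _ (F2 := fun j => degc (adj G) (col G) j v)); last first.
    by move=> j kj; rewrite degG.
  rewrite -card_nbhd_degc; apply: eq_card => u; rewrite !inE ltnS.
  by case: (boolP (adj G v u)) => // /rangeG.
exists (col G); do 3!split => //.
move=> v i j i_ge1 ij j_le; rewrite !ecnt_arcs !arcsG; try lia.
by rewrite -!muln2 !mulnK // decrE.
Qed.

Definition cartesian (G H : cgraph) : cgraph :=
  @CGraph (vtx G * vtx H)%type
    (fun x y => (adj G x.1 y.1 && (x.2 == y.2)) || ((x.1 == y.1) && adj H x.2 y.2))
    (fun x y => if x.2 == y.2 then col G x.1 y.1 else col H x.2 y.2).

Section Cartesian.
Variables (k : nat) (G H : cgraph) (AG EG AH EH : nat -> nat).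
Hypotheses (profG : has_profile k G AG EG) (profH : has_profile k H AH EH).

Let adjG_irr x : adj G x x = false. Proof. by apply/negbTE; case: (profile_simple profG). Qed.
Let adjH_irr x : adj H x x = false. Proof. by apply/negbTE; case: (profile_simple profH). Qed.
Let adjG_sym x y : adj G x y = adj G y x. Proof. by case: (profile_simple profG). Qed.
Let adjH_sym x y : adj H x y = adj H y x. Proof. by case: (profile_simple profH). Qed.

Let adjG_neq x y : adj G x y -> x != y.
Proof. by apply: contraTneq => ->; rewrite adjG_irr. Qed.
Let adjH_neq x y : adj H x y -> x != y.
Proof. by apply: contraTneq => ->; rewrite adjH_irr. Qed.

Lemma cartesian_degc_set (v : vtx (cartesian G H)) j :
  [set u | adj (cartesian G H) v u && (col (cartesian G H) v u == j)] =
  ((fun u1 => (u1, v.2)) @: [set u1 | adj G v.1 u1 && (col G v.1 u1 == j)]) :|: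
  ((fun u2 => (v.1, u2)) @: [set u2 | adj H v.2 u2 && (col H v.2 u2 == j)]).
Proof.
case: v => v1 v2; apply/setP => -[u1 u2] /=; rewrite !inE /=.
apply/idP/idP.
- case/andP => /orP [/andP [vu /eqP <-] | /andP [/eqP <- vu]].
    by rewrite eqxx => cj; apply/orP; left; apply/imsetP; exists u1; rewrite ?inE ?vu.
  rewrite (negbTE (adjH_neq vu)).
  by move=> cj; apply/orP; right; apply/imsetP; exists u2; rewrite ?inE ?vu.
- case/orP => /imsetP [w]; rewrite inE => /andP [vw cj] [-> ->] /=.
    by rewrite vw eqxx.
  by rewrite vw eqxx orbT (negbTE (adjH_neq vw)).
Qed.

Lemma cartesian_degc v j :
  degc (adj (cartesian G H)) (col (cartesian G H)) j v =
  degc (adj G) (col G) j v.1 + degc (adj H) (col H) j v.2.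
Proof.
rewrite /degc cartesian_degc_set cardsU_disjoint ?card_imset //; try by move=> ? ? [].
rewrite -setI_eq0; apply/eqP/setP => -[a b]; rewrite !inE; apply/negbTE/negP => /andP [].
case/imsetP => x; rewrite inE => /andP [vx _] [-> ->].
case/imsetP => y _ [ey _].
by move: vx; rewrite ey adjG_irr.
Qed.

Lemma cartesian_cnbhd (v x : vtx (cartesian G H)) :
  (x \in cnbhd (adj (cartesian G H)) v) =
  ((x.2 == v.2) && (x.1 \in cnbhd (adj G) v.1)) ||
  ((x.1 == v.1) && (x.2 \in cnbhd (adj H) v.2)).
Proof.
case: x v => [x1 x2] [v1 v2]; rewrite !inE /= xpair_eqE [v2 == x2]eq_sym [v1 == x1]eq_sym.
by case: (x1 =P v1) => [->|_]; case: (x2 =P v2) => [->|_] /=;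
  rewrite ?adjG_irr ?adjH_irr ?orbF ?andbF ?andbT ?orbT.
Qed.

Lemma cartesian_cnbhd_fst (v x : vtx (cartesian G H)) : x.2 = v.2 ->
  (x \in cnbhd (adj (cartesian G H)) v) = (x.1 \in cnbhd (adj G) v.1).
Proof.
move=> xv; rewrite cartesian_cnbhd xv eqxx /=.
by case: (x.1 =P v.1) => [->|_]; rewrite ?inE ?eqxx ?orbF.
Qed.

Lemma cartesian_cnbhd_snd (v x : vtx (cartesian G H)) : x.1 = v.1 ->
  (x \in cnbhd (adj (cartesian G H)) v) = (x.2 \in cnbhd (adj H) v.2).
Proof.
move=> xv; rewrite cartesian_cnbhd xv eqxx /= orbC.
by case: (x.2 =P v.2) => [->|_]; rewrite ?inE ?eqxx ?orbF.
Qed.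

Lemma cartesian_cnbhd_layer_snd (v x y : vtx (cartesian G H)) :
  x \in cnbhd (adj (cartesian G H)) v -> y \in cnbhd (adj (cartesian G H)) v ->
  x.2 = y.2 -> x.1 != y.1 -> x.2 = v.2.
Proof.
rewrite !cartesian_cnbhd => Nx Ny xy2; apply: contraNeq => xv2.
move: Nx Ny; rewrite -xy2 (negbTE xv2) /= => /andP [/eqP -> _] /andP [/eqP -> _].
by rewrite eqxx.
Qed.

Lemma cartesian_cnbhd_layer_fst (v x y : vtx (cartesian G H)) :
  x \in cnbhd (adj (cartesian G H)) v -> y \in cnbhd (adj (cartesian G H)) v ->
  x.1 = y.1 -> x.2 != y.2 -> x.1 = v.1.
Proof.
rewrite !cartesian_cnbhd => Nx Ny xy1; apply: contraNeq => xv1.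
move: Nx Ny; rewrite -xy1 (negbTE xv1) !orbF => /andP [/eqP -> _] /andP [/eqP -> _].
by rewrite eqxx.
Qed.

Lemma cartesian_arcs (v : vtx (cartesian G H)) j :
  cnbhd_arcs (adj (cartesian G H)) (col (cartesian G H)) j v =
  ((fun p => ((p.1, v.2), (p.2, v.2))) @: cnbhd_arcs (adj G) (col G) j v.1) :|:
  ((fun p => ((v.1, p.1), (v.1, p.2))) @: cnbhd_arcs (adj H) (col H) j v.2).
Proof.
case: v => v1 v2; apply/setP => -[[x1 x2] [y1 y2]].
rewrite in_setU inE /=; apply/and4P/orP.
- case=> Nx Ny /orP [/andP [xy1 /eqP xy2] | /andP [/eqP xy1 xy2]].
  + have /= xv := cartesian_cnbhd_layer_snd Nx Ny xy2 (adjG_neq xy1).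
    subst x2 y2; rewrite eqxx !cartesian_cnbhd_fst //= in Nx Ny * => colj.
    by left; apply/imsetP; exists (x1, y1); rewrite // inE Nx Ny xy1.
  + have /= xv := cartesian_cnbhd_layer_fst Nx Ny xy1 (adjH_neq xy2).
    subst x1 y1; rewrite (negbTE (adjH_neq xy2)) !cartesian_cnbhd_snd //= in Nx Ny *.
    move=> colj.
    by right; apply/imsetP; exists (x2, y2); rewrite // inE Nx Ny xy2.
- case=> /imsetP [[a b]]; rewrite inE /= => /and4P [Na Nb ab colj] [-> -> -> ->].
    by rewrite !cartesian_cnbhd_fst //= ab !eqxx.
  by rewrite !cartesian_cnbhd_snd //= (negbTE (adjH_neq ab)) ab !eqxx andbF.
Qed.

Lemma cartesian_card_arcs v j :
  #|cnbhd_arcs (adj (cartesian G H)) (col (cartesian G H)) j v| =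
  #|cnbhd_arcs (adj G) (col G) j v.1| + #|cnbhd_arcs (adj H) (col H) j v.2|.
Proof.
rewrite cartesian_arcs cardsU_disjoint ?card_imset //; try by move=> [? ?] [? ?] [-> ->].
rewrite -setI_eq0; apply/eqP/setP => -[[a1 a2] [b1 b2]]; rewrite !inE.
apply/negbTE/negP => /andP [/imsetP [[x y]]]; rewrite inE => /and4P [_ _ xy _] [-> _ -> _].
by case/imsetP => -[? ?] _ [ex _ ey _]; move: xy; rewrite ex ey adjG_irr.
Qed.

Lemma has_profile_cartesian :
  has_profile k (cartesian G H) (fun j => AG j + AH j) (fun j => EG j + EH j).
Proof.
split.
- split => [[x1 x2]|[x1 x2] [y1 y2]] /=; first by rewrite adjG_irr adjH_irr !andbF.
  by rewrite adjG_sym adjH_sym eq_sym [x1 == y1]eq_sym.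
- move=> [x1 x2] [y1 y2] /=; rewrite eq_sym; case: ifP => _.
    exact: (profile_col_sym profG).
  exact: (profile_col_sym profH).
- move=> [x1 x2] [y1 y2] /= /orP [/andP [xy /eqP <-]|/andP [/eqP <- xy]].
    by rewrite eqxx; apply: (profile_col_range profG).
  by rewrite (negbTE (adjH_neq xy)); apply: (profile_col_range profH).
- by move=> v j kj; rewrite cartesian_degc (profile_degc profG) ?(profile_degc profH).
- move=> v j kj.
  by rewrite cartesian_card_arcs (profile_arcs profG) ?(profile_arcs profH) ?doubleD.
- by rewrite card_prod muln_gt0 (profile_nonempty profG) (profile_nonempty profH).
Qed.

End Cartesian.

Definition cgraph1 : cgraph := @CGraph unit (fun _ _ => false) (fun _ _ => 0).

Lemma has_profile_cgraph1 k : has_profile k cgraph1 (fun _ => 0) (fun _ => 0).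
Proof.
split => [//|//|//|v j _|v j _|]; last by rewrite card_unit.
- by apply/eqP; rewrite cards_eq0; apply/eqP/setP => u; rewrite !inE.
- by apply/eqP; rewrite cards_eq0; apply/eqP/setP => u; rewrite !inE andbF.
Qed.

Definition cartesian_big (s : seq nat) (F : nat -> cgraph) : cgraph :=
  foldr (fun i G => cartesian (F i) G) cgraph1 s.

Lemma has_profile_cartesian_big k (s : seq nat) (F : nat -> cgraph)
    (A E : nat -> nat -> nat) :
  (forall i, i \in s -> has_profile k (F i) (A i) (E i)) ->
  has_profile k (cartesian_big s F)
    (fun j => \sum_(i <- s) A i j) (fun j => \sum_(i <- s) E i j).
Proof.
elim: s => [|i s IHs] profF.
  by apply: eq_has_profile (has_profile_cgraph1 k) => j _; rewrite big_nil.
apply: eq_has_profile (has_profile_cartesian (profF i (mem_head _ _)) (IHs _)).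
- by move=> j _; rewrite big_cons.
- by move=> j _; rewrite big_cons.
by move=> i' si'; apply: profF; rewrite in_cons si' orbT.
Qed.

Definition cartesian_pow (n : nat) (G : cgraph) : cgraph :=
  cartesian_big (index_iota 0 n) (fun _ => G).

Lemma has_profile_cartesian_pow k n G A E :
  has_profile k G A E ->
  has_profile k (cartesian_pow n G) (fun j => n * A j) (fun j => n * E j).
Proof.
move=> profG; apply: eq_has_profile (has_profile_cartesian_big (fun _ _ => profG)).
- by move=> j _; rewrite sum_nat_const_nat subn0.
- by move=> j _; rewrite sum_nat_const_nat subn0.
Qed.

Lemma card_offdiag (T : finType) : #|[set p : T * T | p.1 != p.2]| = #|T| * #|T|.-1.
Proof.
rewrite card_set_pairs -sum_nat_const; apply: eq_bigr => a _.
by rewrite -(cardsC1 a); apply: eq_card => b; rewrite !inE eq_sym.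
Qed.

Definition mono_clique (n c : nat) : cgraph :=
  @CGraph 'I_n (fun x y => x != y) (fun _ _ => c).

Lemma has_profile_mono_clique k n c : 0 < n -> 1 <= c <= k ->
  has_profile k (mono_clique n c)
    (fun j => (c == j) * n.-1) (fun j => (c == j) * 'C(n, 2)).
Proof.
move=> n_gt0 ck; split => //=.
- by split => [x|x y] /=; rewrite ?eqxx // eq_sym.
- move=> v j _; have [<- | /negbTE cj] := eqVneq c j; rewrite /degc; last first.
    by apply/eqP; rewrite cards_eq0; apply/eqP/setP => u; rewrite !inE cj andbF.
  rewrite /= mul1n -[in RHS](card_ord n) -(cardsC1 v).
  by apply: eq_card => u; rewrite !inE eqxx andbT eq_sym.
- move=> v j _; have [<- | /negbTE cj] := eqVneq c j; last first.
    by apply/eqP; rewrite cards_eq0; apply/eqP/setP => u; rewrite !inE cj !andbF.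
  rewrite /= mul1n -mul2n -mul_bin_diag bin1 -[in RHS](card_ord n) -card_offdiag.
  by apply: eq_card => p; rewrite !inE !(eq_sym v) !orbN eqxx andbT.
- by rewrite card_ord.
Qed.

Lemma card_set_in_bool (T : finType) (A : {set T}) (b : bool) :
  #|[set u in A | b]| = b * #|A|.
Proof.
case: b; first by rewrite mul1n; apply: eq_card => u; rewrite !inE andbT.
by apply/eqP; rewrite cards_eq0; apply/eqP/setP => u; rewrite !inE andbF.
Qed.

(* Vertex (s, (b, a, a')): side s, block b. Inside a side, block b spans the
   4-cycle K_{2,2} with parts indexed by a; the two sides are completely joined. *)
Definition c4_join (t kap lam : nat) : cgraph :=
  @CGraph (bool * ('I_t * bool * bool))%type
    (fun x y => (x.1 != y.1) || ((x.2.1.1 == y.2.1.1) && (x.2.1.2 != y.2.1.2)))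
    (fun x y => if x.1 == y.1 then kap else lam).

Section C4Join.
Variables (t kap lam : nat).
Local Notation G := (c4_join t kap lam).
Local Notation V := (vtx G).

Definition side_nbrs (v : V) : {set V} :=
  [set u | [&& u.1 == v.1, u.2.1.1 == v.2.1.1 & u.2.1.2 != v.2.1.2]].
Definition other_side (v : V) : {set V} := [set u | u.1 != v.1].

Lemma card_side_nbrs v : #|side_nbrs v| = 2.
Proof.
have -> : side_nbrs v = setX [set v.1] (setX (setX [set v.2.1.1] [set ~~ v.2.1.2]) setT).
  case: v => s [[b a] a']; apply/setP => -[s' [[b' c] c']]; rewrite !inE /=.
  by case: a; case: c; rewrite ?andbT.
by rewrite !cardsX !cards1 cardsT card_bool.
Qed.

Lemma card_other_side v : #|other_side v| = 4 * t.
Proof.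
have -> : other_side v = setX [set ~~ v.1] setT.
  by case: v => s x; apply/setP => -[s' y]; rewrite !inE /= andbT; case: s; case: s'.
by rewrite cardsX cards1 cardsT !card_prod card_ord card_bool; lia.
Qed.

Lemma c4_join_degc v j :
  degc (adj G) (col G) j v = (kap == j) * 2 + (lam == j) * (4 * t).
Proof.
rewrite /degc; have -> : [set u | adj G v u && (col G v u == j)] =
          [set u in side_nbrs v | kap == j] :|: [set u in other_side v | lam == j].
  case: v => s [[b a] a']; apply/setP => -[s' [[b' c] c']]; rewrite !inE /=.
  rewrite [b' == b]eq_sym.
  by case: s; case: s'; case: a; case: c; rewrite /= ?andbF ?orbF ?andbT ?orbT.
rewrite cardsU_disjoint ?card_set_in_bool ?card_side_nbrs ?card_other_side //.
rewrite -setI_eq0; apply/eqP/setP => u; rewrite !inE.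
by case: (u.1 == v.1); rewrite ?andbF.
Qed.

Definition side_cnbhd (v : V) : {set V} := v |: side_nbrs v.

Lemma card_side_cnbhd v : #|side_cnbhd v| = 3.
Proof. by rewrite cardsU1 card_side_nbrs !inE !eqxx. Qed.

Lemma c4_join_cnbhd v x :
  (x \in cnbhd (adj G) v) = (x \in side_cnbhd v) || (x \in other_side v).
Proof.
case: v => s [[b a] a']; case: x => s' [[b' c] c'].
rewrite !inE /= [b == b']eq_sym.
by case: s; case: s'; case: a; case: c; rewrite /= ?andbF ?orbF ?andbT ?orbT.
Qed.

Definition arcs_by_side (v : V) (same : bool) : {set V * V} :=
  [set p | [&& p.1 \in cnbhd (adj G) v, p.2 \in cnbhd (adj G) v, adj G p.1 p.2 &
              (p.1.1 == p.2.1) == same]].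

Lemma c4_join_card_arcs v j :
  #|cnbhd_arcs (adj G) (col G) j v| =
  (kap == j) * #|arcs_by_side v true| + (lam == j) * #|arcs_by_side v false|.
Proof.
have -> : cnbhd_arcs (adj G) (col G) j v =
          [set p in arcs_by_side v true | kap == j] :|:
          [set p in arcs_by_side v false | lam == j].
  apply/setP => -[x y]; rewrite !inE /=.
  by case: (x.1 == y.1); rewrite /= !andbA ?andbT ?andbF ?orbF.
rewrite cardsU_disjoint ?card_set_in_bool //.
rewrite -setI_eq0; apply/eqP/setP => -[x y]; rewrite !inE /=.
by case: (x.1 == y.1); rewrite /= ?andbF.
Qed.

Lemma card_cross_arcs v : #|arcs_by_side v false| = 24 * t.
Proof.
have -> : arcs_by_side v false =
          setX (side_cnbhd v) (other_side v) :|: setX (other_side v) (side_cnbhd v).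
  apply/setP => -[x y]; rewrite [in LHS]inE /= !c4_join_cnbhd.
  case: v => s [[b a] a']; case: x => s1 [[b1 c1] c1']; case: y => s2 [[b2 c2] c2'].
  rewrite !inE /=.
  by case: s; case: s1; case: s2; rewrite /= ?andbF ?orbF ?andbT ?orbT.
rewrite cardsU_disjoint ?cardsX ?card_side_cnbhd ?card_other_side; first lia.
rewrite -setI_eq0; apply/eqP/setP => -[x y]; rewrite !inE /=.
case: v => s [[b a] a']; case: x => s1 [[b1 c1] c1']; case: y => s2 [[b2 c2] c2'] /=.
by case: s; case: s1; case: s2; rewrite /= ?andbF ?orbF ?andbT ?orbT.
Qed.

Definition other_side_arcs (v : V) : {set V * V} :=
  [set p | [&& p.1 \in other_side v, p.2 \in other_side v & adj G p.1 p.2]].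

Lemma card_other_side_arcs v : #|other_side_arcs v| = 8 * t.
Proof.
rewrite card_set_pairs (eq_bigr (fun x => (x \in other_side v) * 2)); last first.
  move=> x _; case xv: (x \in other_side v); last first.
    by apply/eqP; rewrite cards_eq0; apply/eqP/setP => y; move: xv; rewrite !inE /= => ->.
  rewrite -(card_side_nbrs x) mul1n; apply: eq_card => y.
  move: xv; rewrite !inE /=.
  case: x => s1 [[b1 c1] c1']; case: y => s2 [[b2 c2] c2']; case: v => s [[b a] a'] /=.
  rewrite [b2 == b1]eq_sym.
  by case: s; case: s1; case: s2; case: c1; case: c2;
    rewrite /= ?andbF ?orbF ?andbT ?orbT.
rewrite -big_distrl /= (eq_bigr (fun i => if i \in other_side v then 1 else 0)) //.
by rewrite -big_mkcond sum1_card card_other_side; lia.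
Qed.

Lemma card_inside_arcs v : #|arcs_by_side v true| = 8 * t + 4.
Proof.
have -> : arcs_by_side v true =
          (setX [set v] (side_nbrs v) :|: setX (side_nbrs v) [set v]) :|: other_side_arcs v.
  apply/setP => -[x y]; rewrite [in LHS]inE /= !c4_join_cnbhd.
  case: v => s [[b a] a']; case: x => s1 [[b1 c1] c1']; case: y => s2 [[b2 c2] c2'].
  rewrite !inE /= !xpair_eqE /=.
  case: (b1 =P b) => [->|_]; case: (b2 =P b) => [->|_]; rewrite ?eqxx;
  by case: s; case: s1; case: s2; case: a; case: c1; case: c2;
    rewrite /= ?andbF ?orbF ?andbT ?orbT.
rewrite cardsU_disjoint; last first.
  rewrite -setI_eq0; apply/eqP/setP => -[x y]; rewrite !inE /=.
  by apply/negbTE/negP => /andP [/orP [/andP [/eqP -> _] | /andP [_ /eqP ->]]];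
    rewrite eqxx ?andbF.
rewrite card_other_side_arcs cardsU_disjoint; last first.
  rewrite -setI_eq0; apply/eqP/setP => -[x y]; rewrite !inE /=.
  by apply/negbTE/negP => /andP [/andP [/eqP -> _] /andP [/and3P [_ _]]]; rewrite eqxx.
by rewrite !cardsX cards1 card_side_nbrs; lia.
Qed.

Lemma has_profile_c4_join k : 0 < t -> 1 <= kap <= k -> 1 <= lam <= k ->
  has_profile k G (fun j => (kap == j) * 2 + (lam == j) * (4 * t))
    (fun j => (kap == j) * (4 * t + 2) + (lam == j) * (12 * t)).
Proof.
move=> t_gt0 kap_k lam_k; split => /=.
- split => [x|x y]; rewrite ?eqxx //= eq_sym; congr (_ || _).
  by rewrite eq_sym; congr (_ && _); rewrite eq_sym.
- by move=> x y; rewrite eq_sym.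
- by move=> x y _; case: ifP.
- by move=> v j _; rewrite c4_join_degc.
- move=> v j _; rewrite c4_join_card_arcs card_inside_arcs card_cross_arcs.
  by case: (kap == j); case: (lam == j); rewrite /=; lia.
- by rewrite !card_prod card_ord card_bool; lia.
Qed.

End C4Join.

(** * A flip graph with a_q fixed and a_k unbounded *)

Section Witness.
Variables (k q t : nat).
Hypothesis quarter : 4 * q <= k.

Definition c4_copies (large : bool) := if large then k - 4 * q else 4 * (k - q).

Definition c4_part : cgraph :=
  cartesian_big (index_iota q.+1 k.+1) (fun l =>
    cartesian_big (index_iota 1 k.+1) (fun c =>
      cartesian_pow (c4_copies (q < c)) (c4_join t c l))).

(* Contributes 4k + j to a_j and 6k - j to e_j, which orders the colours
   within each of the blocks j <= q and j > q. *)
Definition clique_part : cgraph :=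
  cartesian_big (index_iota 1 k.+1) (fun j =>
    cartesian (cartesian_pow (5 * j) (mono_clique 2 j))
              (cartesian_pow (2 * (k - j)) (mono_clique 3 j))).

Definition flip_witness : cgraph := cartesian c4_part clique_part.

Definition deg_offset (large : bool) :=
  (k - q) * (c4_copies large * 2) + large * (k * (k - q) * (4 * t)).
Definition ecnt_offset (large : bool) :=
  (k - q) * (c4_copies large * (4 * t + 2)) + large * (k * (k - q) * (12 * t)).

Definition witness_deg j := deg_offset (q < j) + (4 * k + j).
Definition witness_ecnt j := ecnt_offset (q < j) + (6 * k - j).

Lemma sum_c4_copies : \sum_(1 <= c < k.+1) c4_copies (q < c) = k * (k - q).
Proof.
rewrite (big_cat_nat (n := q.+1)) //=; last lia.
rewrite (eq_big_nat _ _ (F2 := fun _ => 4 * (k - q))); last first.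
  by move=> c /andP [_ cq]; rewrite /c4_copies ltnNge -ltnS cq.
rewrite [X in _ + X](eq_big_nat _ _ (F2 := fun _ => k - 4 * q)); last first.
  by move=> c /andP [qc _]; rewrite /c4_copies qc.
rewrite !sum_nat_const_nat; nia.
Qed.

Lemma sum_c4_copies_indicator (X Z j : nat) : 1 <= j <= k ->
  \sum_(1 <= c < k.+1) c4_copies (q < c) * ((c == j) * X + Z)
  = c4_copies (q < j) * X + k * (k - q) * Z.
Proof.
move=> jk; rewrite (eq_bigr (fun c => (c == j) * (c4_copies (q < j) * X)
                                    + c4_copies (q < c) * Z)) => [|c _]; last first.
  by case: eqP => [->|_]; rewrite ?mul1n ?mul0n mulnDr.
rewrite big_split /= sum_indicator -big_distrl /= sum_c4_copies.
by rewrite ltnS jk mul1n.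
Qed.

Lemma sum_c4_profile (X Y j : nat) : 1 <= j <= k ->
  \sum_(q.+1 <= l < k.+1) \sum_(1 <= c < k.+1)
     c4_copies (q < c) * ((c == j) * X + (l == j) * Y)
  = (k - q) * (c4_copies (q < j) * X) + (q < j) * (k * (k - q) * Y).
Proof.
move=> jk; under eq_bigr => l _ do rewrite sum_c4_copies_indicator //.
rewrite big_split /= sum_nat_const_nat subSS.
under eq_bigr => l _ do rewrite mulnCA.
rewrite sum_indicator; congr (_ + (_ * _)).
by move: jk; rewrite ltnS => /andP [_ ->]; rewrite andbT.
Qed.

Lemma sum_clique_profile (X Y j : nat) : 1 <= j <= k ->
  \sum_(1 <= j' < k.+1) (5 * j' * ((j' == j) * X) + 2 * (k - j') * ((j' == j) * Y))
  = 5 * j * X + 2 * (k - j) * Y.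
Proof.
move=> jk; rewrite (eq_bigr (fun j' => (j' == j) * (5 * j * X + 2 * (k - j) * Y))).
  by rewrite sum_indicator ltnS jk mul1n.
by move=> j' _; case: eqP => [->|_]; rewrite ?mul1n ?mul0n ?muln0.
Qed.

Lemma has_profile_flip_witness : 0 < t ->
  has_profile k flip_witness witness_deg witness_ecnt.
Proof.
move=> t_gt0.
have c4P : has_profile k c4_part
  (fun j => \sum_(q.+1 <= l < k.+1) \sum_(1 <= c < k.+1)
              c4_copies (q < c) * ((c == j) * 2 + (l == j) * (4 * t)))
  (fun j => \sum_(q.+1 <= l < k.+1) \sum_(1 <= c < k.+1)
              c4_copies (q < c) * ((c == j) * (4 * t + 2) + (l == j) * (12 * t))).
  apply: has_profile_cartesian_big => l; rewrite mem_index_iota => lk.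
  apply: has_profile_cartesian_big => c; rewrite mem_index_iota => ck.
  by apply: has_profile_cartesian_pow; apply: has_profile_c4_join => //; lia.
have cliqueP : has_profile k clique_part
  (fun j => \sum_(1 <= j' < k.+1) (5 * j' * ((j' == j) * 1)
                                   + 2 * (k - j') * ((j' == j) * 2)))
  (fun j => \sum_(1 <= j' < k.+1) (5 * j' * ((j' == j) * 'C(2, 2))
                                   + 2 * (k - j') * ((j' == j) * 'C(3, 2)))).
  apply: has_profile_cartesian_big => j; rewrite mem_index_iota => jk.
  by apply: has_profile_cartesian; apply: has_profile_cartesian_pow;
    apply: has_profile_mono_clique => //; lia.
have bin22 : 'C(2, 2) = 1 by [].
have bin32 : 'C(3, 2) = 3 by [].
apply: eq_has_profile (has_profile_cartesian c4P cliqueP) => j jk /=;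
  rewrite sum_c4_profile // sum_clique_profile // /witness_deg /witness_ecnt;
  congr (_ + _); move: jk; rewrite ?bin22 ?bin32 inE; lia.
Qed.

Lemma deg_offset_le : 2 <= t -> deg_offset false <= deg_offset true.
Proof.
move=> t_ge2; rewrite /deg_offset /c4_copies mul0n addn0 mul1n.
apply: leq_trans (leq_addl _ _); rewrite (mulnC k) -[leqRHS]mulnA leq_mul2l.
by apply/orP; right; nia.
Qed.

Lemma ecnt_offset_le : ecnt_offset true <= ecnt_offset false.
Proof.
rewrite /ecnt_offset /c4_copies mul0n addn0 mul1n (mulnC k) -mulnA -mulnDr leq_mul2l.
by apply/orP; right; nia.
Qed.

Lemma witness_deg_incr : 2 <= t -> incr_pos_seq k witness_deg.
Proof.
move=> t_ge2; split=> [j /andP [j_gt0 _]|i j _ ij _]; first by rewrite !ltn_addl.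
rewrite /witness_deg -addnS leq_add //; last lia.
have [qi|_] := ltnP q i; first by rewrite (ltn_trans qi ij).
by case: (q < j) => //; apply: deg_offset_le.
Qed.

Lemma witness_ecnt_decr i j : i < j -> j <= k -> witness_ecnt j < witness_ecnt i.
Proof.
move=> ij jk; rewrite /witness_ecnt -addnS leq_add //; last lia.
have [qi|_] := ltnP q i; first by rewrite (ltn_trans qi ij).
by case: (q < j) => //; apply: ecnt_offset_le.
Qed.

End Witness.

Lemma admissible_quarter k q : 0 < q -> 4 * q <= k -> admissible k q.
Proof.
move=> q_gt0 quarter; split; first lia.
exists (witness_deg k q 2 q) => N.
exists (witness_deg k q N.+2); split; last split.
- apply: flip_seq_of_profile (has_profile_flip_witness quarter _) _ _ => //.
    exact: witness_deg_incr.
  by move=> i j _; apply: witness_ecnt_decr.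
- by rewrite /witness_deg /deg_offset ltnn !mul0n.
- rewrite /witness_deg /deg_offset (_ : q < k) ?mul1n; last lia.
  have : 0 < k * (k - q) by rewrite muln_gt0; lia.
  nia.
Qed.

Section UpperBound.
Variables (T : finType) (e : rel T) (c : T -> T -> nat) (k q : nat) (a : nat -> nat).
Hypotheses (e_simple : simple_graph e) (c_sym : forall x y, c x y = c y x)
  (c_range : forall x y, e x y -> 1 <= c x y <= k)
  (degc_a : forall v j, 1 <= j <= k -> degc e c j v = a j)
  (arcs_mono : forall v i j, 1 <= i <= j -> j <= k ->
     #|cnbhd_arcs e c j v| <= #|cnbhd_arcs e c i v|)
  (q_gt0 : 0 < q) (q_lt_k : q < k) (k_le_3q : k <= 3 * q).

Let e_irr x : e x x = false. Proof. by apply/negbTE; case: e_simple. Qed.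
Let e_sym x y : e x y = e y x. Proof. by case: e_simple. Qed.

Local Notation small x y := (e x y && (c x y <= q)).
Local Notation large x y := (e x y && (q < c x y)).
Local Notation arcs j v := (cnbhd_arcs e c j v).

Definition small_sum := \sum_(1 <= j < q.+1) a j.

Definition small_arcs v : {set T * T} :=
  [set p | [&& p.1 \in cnbhd e v, p.2 \in cnbhd e v & small p.1 p.2]].
Definition large_arcs v : {set T * T} :=
  [set p | [&& p.1 \in cnbhd e v, p.2 \in cnbhd e v & large p.1 p.2]].

Lemma card_arcs_range v lo hi :
  #|[set p | [&& p.1 \in cnbhd e v, p.2 \in cnbhd e v, e p.1 p.2 & lo <= c p.1 p.2 < hi]]|
  = \sum_(lo <= j < hi) #|arcs j v|.
Proof.
rewrite (eq_bigr (fun j => #|[set p | [&& p.1 \in cnbhd e v, p.2 \in cnbhd e v & e p.1 p.2]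
                                      && (c p.1 p.2 == j)]|)); last first.
  by move=> j _; apply: eq_card => p; rewrite !inE !andbA.
by rewrite -card_set_nat_range; apply: eq_card => p; rewrite !inE !andbA.
Qed.

Lemma card_small_arcs v : #|small_arcs v| = \sum_(1 <= j < q.+1) #|arcs j v|.
Proof.
rewrite -card_arcs_range.
apply: eq_card => p; rewrite !inE ltnS; case pE: (e p.1 p.2); rewrite ?andbF //=.
by have /andP [-> _] := c_range pE.
Qed.

Lemma card_large_arcs v : #|large_arcs v| = \sum_(q.+1 <= j < k.+1) #|arcs j v|.
Proof.
rewrite -card_arcs_range.
apply: eq_card => p; rewrite !inE ltnS; case pE: (e p.1 p.2); rewrite ?andbF //=.
by have /andP [_ ->] := c_range pE; rewrite andbT.
Qed.

(* The e_j[v] decrease in j and there are only k - q <= 2q large colours. *)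
Lemma large_arcs_le v : #|large_arcs v| <= 2 * #|small_arcs v|.
Proof.
have large_le : #|large_arcs v| <= (k - q) * #|arcs q v|.
  rewrite card_large_arcs -(subSS q k) -sum_nat_const_nat.
  rewrite big_nat_cond [leqRHS]big_nat_cond.
  by apply: leq_sum => j /andP [jr _]; apply: arcs_mono; lia.
have small_ge : q * #|arcs q v| <= #|small_arcs v|.
  rewrite card_small_arcs -[X in X * _](subn1 q.+1) -sum_nat_const_nat.
  rewrite big_nat_cond [leqRHS]big_nat_cond.
  by apply: leq_sum => j /andP [jr _]; apply: arcs_mono; lia.
apply: (leq_trans large_le); apply: leq_trans (leq_mul (leqnn 2) small_ge).
by rewrite mulnA leq_mul2r; apply/orP; right; lia.
Qed.

Lemma card_small_nbrs v : #|[set y | small v y]| = small_sum.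
Proof.
rewrite /small_sum -(eq_big_nat _ _ (F1 := fun j => degc e c j v)); last first.
  by move=> j jq; apply: degc_a; lia.
rewrite -card_nbhd_degc; apply: eq_card => y; rewrite !inE ltnS.
by case yE: (e v y) => //=; have /andP [-> _] := c_range yE.
Qed.

(* A triple (v, (x, y)) stands for the arc (x, y) seen from v. *)
Local Notation triple := (T * (T * T))%type.

Lemma card_swap_triples (P : T -> T -> T -> bool) :
  #|[set w : triple | P w.1 w.2.2 w.2.1]| = #|[set w : triple | P w.1 w.2.1 w.2.2]|.
Proof.
pose swap (w : triple) := (w.1, (w.2.2, w.2.1)).
have swapK : involutive swap by case=> v [].
rewrite -[RHS](card_imset _ (inv_inj swapK)); apply: eq_card => w.
by rewrite -[w in RHS]swapK mem_imset ?inE; last exact: inv_inj.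
Qed.

Lemma card_triples_by_apex (P : T -> {set T * T}) :
  #|[set w : triple | w.2 \in P w.1]| = \sum_v #|P v|.
Proof.
by rewrite card_set_pairs; apply: eq_bigr => v _; apply: eq_card => p; rewrite !inE.
Qed.

Definition small_spokes := [set w : triple | (w.2.1 == w.1) && small w.1 w.2.2].
Definition small_paths := [set w : triple | small w.1 w.2.1 && small w.2.1 w.2.2].
Definition apex_triples :=
  [set w : triple | [&& large w.1 w.2.1, large w.1 w.2.2 & small w.2.1 w.2.2]].

Lemma card_small_spokes : #|small_spokes| = #|T| * small_sum.
Proof.
rewrite card_set_pairs -sum_nat_const; apply: eq_bigr => v _.
rewrite -(card_small_nbrs v) -[RHS]mul1n -(cards1 v) -cardsX.
by apply: eq_card => -[x y]; rewrite !inE.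
Qed.

Lemma card_small_paths : #|small_paths| = #|T| * (small_sum * small_sum).
Proof.
rewrite card_set_pairs -sum_nat_const; apply: eq_bigr => v _.
rewrite card_set_pairs (eq_bigr (fun x => small v x * small_sum)); last first.
  move=> x _; case vx: (small v x); rewrite ?mul1n ?mul0n.
    by rewrite -(card_small_nbrs x); apply: eq_card => y; rewrite !inE vx.
  by apply/eqP; rewrite cards_eq0; apply/eqP/setP => y; rewrite !inE vx.
by rewrite -big_distrl /= -(card_small_nbrs v) card_set_sum.
Qed.

Lemma small_triples_sub :
  [set w : triple | w.2 \in small_arcs w.1] \subset
  small_spokes :|: [set w | (w.2.2 == w.1) && small w.1 w.2.1]
  :|: small_paths :|: [set w | small w.1 w.2.2 && small w.2.2 w.2.1] :|: apex_triples.
Proof.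
apply/subsetP => -[v [x y]]; rewrite !inE /=.
case/and4P => /orP [/eqP -> | vx] /orP [/eqP -> | vy] xy cxy.
- by rewrite e_irr in xy.
- by rewrite eqxx xy cxy.
- by rewrite eqxx e_sym xy c_sym cxy orbT.
rewrite [e y x]e_sym [c y x]c_sym xy cxy vx vy /= !andbT.
by case: (leqP (c v x) q); case: (leqP (c v y) q); rewrite ?orbT.
Qed.

Lemma sum_small_arcs_le :
  \sum_v #|small_arcs v| <=
  2 * (#|T| * small_sum) + 2 * (#|T| * (small_sum * small_sum)) + #|apex_triples|.
Proof.
have spokes' : #|[set w : triple | (w.2.2 == w.1) && small w.1 w.2.1]| = #|small_spokes|
  := card_swap_triples (fun v x y => (x == v) && small v y).
have paths' : #|[set w : triple | small w.1 w.2.2 && small w.2.2 w.2.1]| = #|small_paths|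
  := card_swap_triples (fun v x y => small v x && small x y).
rewrite -card_triples_by_apex; apply: leq_trans (subset_leq_card small_triples_sub) _.
by rewrite !cardsU spokes' paths' card_small_spokes card_small_paths; lia.
Qed.

Definition top_spokes :=
  [set w : triple | [&& w.2.1 == w.1, e w.1 w.2.2 & c w.1 w.2.2 == k]].

Lemma card_top_spokes : #|top_spokes| = #|T| * a k.
Proof.
rewrite card_set_pairs -sum_nat_const; apply: eq_bigr => v _.
rewrite -(degc_a v (j := k)); last lia.
rewrite -[RHS]mul1n -(cards1 v) /degc -cardsX.
by apply: eq_card => -[x y]; rewrite !inE.
Qed.

Definition rotate (w : triple) : triple := (w.2.2, (w.1, w.2.1)).

Lemma rotate_inj : injective rotate.
Proof. by move=> [v [x y]] [v' [x' y']] [-> -> ->]. Qed.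

(* Each apex triple (v, x, y) yields the large arcs (v, x) in N[y] and (y, v) in N[x]. *)
Lemma large_triples_sup :
  top_spokes :|: rotate @: apex_triples :|: (rotate \o rotate) @: apex_triples \subset
  [set w : triple | w.2 \in large_arcs w.1].
Proof.
apply/subsetP => -[v [x y]]; rewrite !inE /=.
case/orP => [/orP [] |].
- by case/and3P => /eqP -> vy /eqP cvy; rewrite eqxx vy cvy q_lt_k orbT.
- case/imsetP => -[v' [x' y']]; rewrite inE /=.
  case/and3P => /andP [e1 c1] /andP [e2 c2] /andP [e3 c3] [-> -> ->].
  by rewrite e_sym e2 e_sym e3 e1 c1 !orbT.
- case/imsetP => -[v' [x' y']]; rewrite inE /=.
  case/and3P => /andP [e1 c1] /andP [e2 c2] /andP [e3 c3] [-> -> ->].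
  by rewrite e3 e_sym e1 e_sym e2 c_sym c2 !orbT.
Qed.

Lemma sum_large_arcs_ge : #|T| * a k + 2 * #|apex_triples| <= \sum_v #|large_arcs v|.
Proof.
rewrite -card_triples_by_apex; apply: leq_trans (subset_leq_card large_triples_sup).
have rotate2_inj : injective (rotate \o rotate) := inj_comp rotate_inj rotate_inj.
rewrite cardsU_disjoint; last first.
  rewrite -setI_eq0; apply/eqP/setP => -[v [x y]]; rewrite !inE /=.
  apply/negbTE/negP => /andP [/orP [/and3P [/eqP xv _ _] |] ].
    case/imsetP => -[v' [x' y']]; rewrite inE => /and3P [_ _ /andP [xy _]] [ev ex _].
    by move: xy; rewrite -ex -ev xv e_irr.
  case/imsetP => -[v' [x' y']]; rewrite inE => /and3P [_ _ /andP [_ cxy]] [ev1 _ ey1].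
  case/imsetP => -[v'' [x'' y'']]; rewrite inE => /and3P [/andP [_ cvx] _ _] [ev2 _ ey2].
  by move: cxy; rewrite -ey1 -ev1 ey2 ev2 leqNgt cvx.
rewrite cardsU_disjoint; last first.
  rewrite -setI_eq0; apply/eqP/setP => -[v [x y]]; rewrite !inE /=.
  apply/negbTE/negP => /andP [/and3P [/eqP xv _ _]].
  case/imsetP => -[v' [x' y']]; rewrite inE => /and3P [_ /andP [vy _] _] [ev ex _].
  by move: vy; rewrite -ex -ev xv e_irr.
by rewrite (card_imset _ rotate_inj) (card_imset _ rotate2_inj) card_top_spokes; lia.
Qed.

Lemma top_degree_bound :
  0 < #|T| -> a k <= 4 * small_sum + 4 * (small_sum * small_sum).
Proof.
move=> T_gt0; rewrite -(leq_pmul2l T_gt0).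
have large_le_small : \sum_v #|large_arcs v| <= 2 * \sum_v #|small_arcs v|.
  by rewrite big_distrr; apply: leq_sum => v _; apply: large_arcs_le.
have := sum_large_arcs_ge; have := sum_small_arcs_le; lia.
Qed.

End UpperBound.

Lemma arcs_mono_of_ecnt (T : finType) (e : rel T) c k :
  (forall v i j, 1 <= i -> i < j -> j <= k -> ecnt e c j v < ecnt e c i v) ->
  forall v i j, 1 <= i <= j -> j <= k ->
    #|cnbhd_arcs e c j v| <= #|cnbhd_arcs e c i v|.
Proof.
move=> ecnt_decr v i j /andP [i_ge1]; rewrite leq_eqVlt => /orP [/eqP -> //| ij] jk.
move: (ecnt_decr v i j i_ge1 ij jk); rewrite !ecnt_arcs; apply: contraLR.
by rewrite -ltnNge -leqNgt => /ltnW; apply: leq_div2r.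
Qed.

Lemma small_sum_le k q a : incr_pos_seq k a -> q <= k -> small_sum q a <= q * a q.
Proof.
case=> _ a_incr qk; rewrite /small_sum -[X in X * _](subn1 q.+1) -sum_nat_const_nat.
rewrite big_nat_cond [leqRHS]big_nat_cond; apply: leq_sum => j /andP [/andP [j_ge1 jq] _].
have [jq'|qj|->] := ltngtP j q; [exact/ltnW/a_incr | lia | by []].
Qed.

Lemma admissible_lt_third k q : admissible k q -> 3 * q < k.
Proof.
case=> /andP [q_gt0 qk] [h a_h]; rewrite ltnNge; apply/negP => k_le_3q.
have [a [[incr [T [e [T_gt0 flip]]]] [aq ak]]] :=
  a_h (4 * (q * h) + 4 * ((q * h) * (q * h))).
case: flip => _ [simple [_ [c [c_sym [c_range [degc_a ecnt_decr]]]]]].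
have q_lt_k : q < k by lia.
have := top_degree_bound simple c_sym c_range degc_a (arcs_mono_of_ecnt ecnt_decr)
  q_gt0 q_lt_k k_le_3q T_gt0.
have S_le : small_sum q a <= q * h by rewrite -aq (small_sum_le incr); lia.
have := leq_add (leq_mul (leqnn 4) S_le) (leq_mul (leqnn 4) (leq_mul S_le S_le)).
lia.
Qed.

Theorem theorem4p1 (k : nat) (hk : 3 < k) :
  (exists q, admissible k q /\ maxn 1 ((k + 3) %/ 4 - 1) <= q) /\
  (forall q, admissible k q ->
     q < (if k %% 3 == 0 then k %/ 3 else (k + 1) %/ 2)).
Proof.
split.
  exists (k %/ 4); split; first by apply: admissible_quarter; lia.
  by rewrite geq_max; apply/andP; split; lia.
by move=> q /admissible_lt_third; case: ifP => /eqP; lia.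
Qed.
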